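(* For a graph $G=(V,E)$ and integer $\tau\ge 1$ define $$Q_{\mathrm{Del\text{-}Deg}}(G,\tau)=-\tfrac12\sum_{v\in V,\ \deg_G(v)\ge\tau}(\deg_G(v)-\tau).$$ Then: (1) for fixed $G$, $Q_{\mathrm{Del\text{-}Deg}}(G,\tau)$ is non-decreasing in $\tau$ and equals $0$ for all $\tau\ge\deg(G)$; (2) for any two graphs $G,G'$ that differ in exactly one edge, $|Q_{\mathrm{Del\text{-}Deg}}(G,\tau)-Q_{\mathrm{Del\text{-}Deg}}(G',\tau)|\le 1$ for all $\tau$, i.e., its global sensitivity under edge neighboring is $1$; (3) if $G'$ is obtained from $G$ by adding one edge, then $Q_{\mathrm{Del\text{-}Deg}}(G,\tau)\ge Q_{\mathrm{Del\text{-}Deg}}(G',\tau)$ for every $\tau$.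
   Context: Graphs are finite, simple and undirected. $\deg_G(v)$ denotes the degree of node $v$ in $G$ and $\deg(G)=\max_{v}\deg_G(v)$ is the maximum degree. *)

From mathcomp Require Import all_boot all_order all_algebra.
Set Implicit Arguments. Unset Strict Implicit. Unset Printing Implicit Defensive.
Import Order.TTheory GRing.Theory Num.Theory.
Local Open Scope ring_scope.

Definition simple_graph (V : finType) (e : rel V) : Prop :=
  symmetric e /\ irreflexive e.

Definition deg (V : finType) (e : rel V) (v : V) : nat := #|[set u | e v u]|.

Definition maxdeg (V : finType) (e : rel V) : nat := (\max_(v : V) deg e v)%N.

Definition QDelDeg (V : finType) (e : rel V) (tau : nat) : rat :=
  - (1 / 2%:R) * \sum_(v : V | (tau <= deg e v)%N) ((deg e v)%:R - tau%:R).

Definition differ_one_edge (V : finType) (e e' : rel V) : Prop :=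
  exists a b : V, a != b /\
    forall x y : V, (e x y != e' x y) = ((x == a) && (y == b) || (x == b) && (y == a)).

Definition add_one_edge (V : finType) (e e' : rel V) : Prop :=
  exists a b : V, [/\ a != b, ~~ e a b &
    forall x y : V, e' x y = e x y || ((x == a) && (y == b) || (x == b) && (y == a))].

From mathcomp Require Import all_boot all_order all_algebra.
From mathcomp Require Import zify lra.
Import Order.TTheory GRing.Theory Num.Theory.
Set Implicit Arguments. Unset Strict Implicit.

(* With truncated subtraction, -2 Q(G, tau) is the total degree excess
   sum_v (deg v - tau), whose summands are nonincreasing in tau and vanish once
   tau >= deg v.  The excess is monotone in the degrees, and changing one edge
   {a, b} only moves the degrees of a and b, each by one, so the excess moves
   by at most 2. *)

Section DegreeExcess.

Variable V : finType.
Implicit Types (e : rel V) (t : nat).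

Definition deg_excess e t : nat := \sum_(v : V) (deg e v - t).

Definition arcsD e (e' : rel V) : {set V * V} := [set p | e p.1 p.2 && ~~ e' p.1 p.2].

Lemma deg_excess_antitone e t1 t2 : t1 <= t2 -> deg_excess e t2 <= deg_excess e t1.
Proof. by move=> le_t12; apply: leq_sum => v _; apply: leq_sub2l. Qed.

Lemma deg_excess_maxdeg e t : maxdeg e <= t -> deg_excess e t = 0.
Proof.
move=> le_max_t; rewrite /deg_excess big1 // => v _; apply/eqP.
by rewrite subn_eq0 (leq_trans _ le_max_t) // (leq_bigmax (F := deg e)).
Qed.

Lemma deg_le_arcsD e (e' : rel V) v :
  deg e v <= deg e' v + #|[set u | e v u && ~~ e' v u]|.
Proof.
rewrite /deg; apply: leq_trans (leq_card_setU _ _); apply/subset_leq_card/subsetP.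
by move=> u; rewrite !inE; case: (e v u); case: (e' v u).
Qed.

Lemma sum_card_arcsD e (e' : rel V) :
  \sum_(v : V) #|[set u | e v u && ~~ e' v u]| = #|arcsD e e'|.
Proof.
transitivity (\sum_(v : V) \sum_(u | e v u && ~~ e' v u) 1).
  by apply: eq_bigr => v _; rewrite -sum1_card; apply: eq_bigl => u; rewrite inE.
by rewrite pair_big_dep -sum1_card; apply: eq_bigl => p; rewrite inE.
Qed.

Lemma deg_excess_le_arcsD e (e' : rel V) t :
  deg_excess e t <= deg_excess e' t + #|arcsD e e'|.
Proof.
rewrite -sum_card_arcsD -big_split; apply: leq_sum => v _.
by have := deg_le_arcsD e e' v; rewrite /=; lia.
Qed.

Lemma deg_excess_subrel e (e' : rel V) t :
  subrel e e' -> deg_excess e t <= deg_excess e' t.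
Proof.
move=> sub_ee'; have arcsD0 : arcsD e e' = set0.
  by apply/setP => -[x y]; rewrite !inE; apply/negbTE/negP => /andP[/sub_ee' ->].
by have := deg_excess_le_arcsD e e' t; rewrite arcsD0 cards0 addn0.
Qed.

Lemma differ_one_edge_sym e (e' : rel V) : differ_one_edge e e' -> differ_one_edge e' e.
Proof. by move=> [a [b [neq_ab diff_ab]]]; exists a, b; split=> // x y; rewrite eq_sym. Qed.

Lemma differ_one_edge_deg_excess e (e' : rel V) t :
  differ_one_edge e e' -> deg_excess e t <= deg_excess e' t + 2.
Proof.
move=> [a [b [_ diff_ab]]]; apply: leq_trans (deg_excess_le_arcsD e e' t) _.
rewrite leq_add2l (@leq_trans #|[set (a, b); (b, a)]|) //; last first.
  by rewrite cards2 ltnS leq_b1.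
apply/subset_leq_card/subsetP => -[x y]; rewrite !inE /= => /andP[exy ne'xy].
have := diff_ab x y; rewrite exy (negbTE ne'xy) /= => /esym/orP.
by case=> /andP[/eqP-> /eqP->]; rewrite eqxx ?orbT.
Qed.

Lemma add_one_edge_subrel e (e' : rel V) : add_one_edge e e' -> subrel e e'.
Proof. by move=> [a [b [_ _ e'E]]] x y exy; rewrite e'E exy. Qed.

End DegreeExcess.

Local Open Scope ring_scope.

Lemma QDelDegE (V : finType) (e : rel V) t :
  QDelDeg e t = - (1 / 2%:R) * (deg_excess e t)%:R.
Proof.
rewrite /QDelDeg /deg_excess natr_sum; congr (_ * _).
rewrite [RHS](bigID (fun v => (t <= deg e v)%N)) /= [X in _ + X]big1 ?addr0.
  by apply: eq_bigr => v le_t_deg; rewrite natrB.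
by move=> v; rewrite -ltnNge => /ltnW; rewrite -subn_eq0 => /eqP->.
Qed.

Lemma ler_QDelDeg (V : finType) (e e' : rel V) t t' :
  (deg_excess e' t' <= deg_excess e t)%N -> QDelDeg e t <= QDelDeg e' t'.
Proof. by rewrite !QDelDegE -(ler_nat rat) => ?; lra. Qed.

Lemma QDelDeg_dist_le1 (V : finType) (e e' : rel V) t :
  (deg_excess e t <= deg_excess e' t + 2)%N ->
  (deg_excess e' t <= deg_excess e t + 2)%N ->
  `|QDelDeg e t - QDelDeg e' t| <= 1.
Proof.
rewrite !QDelDegE -!(ler_nat rat) !natrD ler_norml => ? ?.
by apply/andP; split; lra.
Qed.

Theorem mainTheorem2 (V : finType) :
  (* (1) monotonicity and vanishing *)
  (forall e : rel V, simple_graph e ->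
     (forall t1 t2 : nat, (1 <= t1)%N -> (t1 <= t2)%N -> QDelDeg e t1 <= QDelDeg e t2) /\
     (forall t : nat, (1 <= t)%N -> (maxdeg e <= t)%N -> QDelDeg e t = 0)) /\
  (* (2) sensitivity at most 1 under edge neighbouring *)
  (forall e e' : rel V, simple_graph e -> simple_graph e' -> differ_one_edge e e' ->
     forall t : nat, (1 <= t)%N -> `|QDelDeg e t - QDelDeg e' t| <= 1) /\
  (* (3) adding an edge does not increase Q *)
  (forall e e' : rel V, simple_graph e -> simple_graph e' -> add_one_edge e e' ->
     forall t : nat, (1 <= t)%N -> QDelDeg e' t <= QDelDeg e t).
Proof.
split; [|split].
- move=> e _; split=> [t1 t2 _ le_t12 | t _ le_max_t].
    exact/ler_QDelDeg/deg_excess_antitone.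
  by rewrite QDelDegE deg_excess_maxdeg // mulr0.
- move=> e e' _ _ diff_ee' t _; apply: QDelDeg_dist_le1.
    exact: differ_one_edge_deg_excess.
  exact/differ_one_edge_deg_excess/differ_one_edge_sym.
- move=> e e' _ _ add_ee' t _; apply/ler_QDelDeg/deg_excess_subrel.
  exact: add_one_edge_subrel.
Qed.
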